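(* Let $\mathcal{T}$ be a triangulation of a marked surface $(S,V)$. Then $D_f(\mathcal{T})\subset Q_f(\mathcal{T})$; that is, if $(\mathbf{I},\mathbf{r})\in\mathbb{R}^{E(\mathcal{T})}_{>1}\times\mathbb{R}^V_{>0}$ satisfies the local weighted Delaunay inequality on every edge of $\mathcal{T}$, then the lengths $L_f(\mathbf{I},\mathbf{r})$ satisfy the triangle inequalities on every face of $\mathcal{T}$ (so they define a piecewise flat metric).
   Context: A marked surface $(S,V)$: closed oriented surface $S$, nonempty finite $V=\{v_1,\dots,v_n\}$, $\chi(S\setminus V)<0$; a triangulation $\mathcal{T}$ is a $\Delta$-complex decomposition with $0$-cells $V$ (up to isotopy fixing $V$), with edges $E(\mathcal{T})$. For $(\mathbf{I},\mathbf{r})\in\mathbb{R}^{E(\mathcal{T})}_{>1}\times\mathbb{R}^V_{>0}$, $L_f(\mathbf{I},\mathbf{r})(e_{ij})=\sqrt{r_i^2+r_j^2+2I_{ij}r_ir_j}$. $Q_f(\mathcal{T})$ is the set of $(\mathbf{I},\mathbf{r})$ for which $L_f(\mathbf{I},\mathbf{r})$ satisfies the strict triangle inequality on every face. Local weighted Delaunay inequality at an edge $e_{ij}$ with adjacent faces $f_{ijk},f_{ijl}$ (hinge $\Diamond_{ij;kl}$): with $p=r_k,q=r_i,r=r_l,s=r_j$, $a=I_{ki},b=I_{il},c=I_{lj},d=I_{jk},e=I_{ij}$, $\Delta_{xyz}=x^2+y^2+z^2+2xyz-1$, $f=\frac{ab+cd+ace+bde+\sqrt{\Delta_{ade}}\sqrt{\Delta_{bce}}}{e^2-1}$,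 it is the inequality $\frac{\sqrt{\Delta_{bce}}}{p}+\frac{\sqrt{\Delta_{ade}}}{r}\le\frac{\sqrt{\Delta_{cdf}}}{q}+\frac{\sqrt{\Delta_{abf}}}{s}$. $D_f(\mathcal{T})$ is the set of $(\mathbf{I},\mathbf{r})\in\mathbb{R}^{E(\mathcal{T})}_{>1}\times\mathbb{R}^V_{>0}$ satisfying it at every edge. *)

From HB Require Import structures.
From mathcomp Require Import all_boot all_order all_algebra.
Set Implicit Arguments. Unset Strict Implicit. Unset Printing Implicit Defensive.
Import Order.TTheory GRing.Theory Num.Theory.
Local Open Scope ring_scope.

(* A triangle side ("half-edge") of face f : F is a pair (f, i), i : 'I_3.
   The side (f, i) goes from corner i to corner i+1 (mod 3) of f, following
   the orientation of f. *)
Definition side (F : finType) := (F * 'I_3)%type.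

Definition snext (F : finType) (h : side F) : side F := (h.1, ordS h.2).

(* A triangulation of a marked surface (S,V), with vertex set V, edge set E
   and face set F:
   - [glue] pairs the sides of the triangles (fixed-point-free involution);
     the gluing identifies side h with side [glue h] reversing orientation,
     so the result is a closed oriented surface;
   - [edge_of h] is the edge of T carried by the side h; edges are exactly
     the pairs {h, glue h};
   - [vert_of h] is the vertex at the start (corner) of side h; vertices are
     exactly the classes of corners identified by the gluing, i.e. the orbits
     of h |-> snext (glue h) (rotation around a vertex);
   - the surface is connected and has at least one face (so that
     chi(S \ V) = #|F| - #|E| = -#|F|/2 < 0). *)
Record triangulation (V E F : finType) := Triangulation {
  glue : side F -> side F;
  edge_of : side F -> E;
  vert_of : side F -> V;
  glue_invol : involutive glue;
  glue_nofix : forall h, glue h != h;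
  edge_ofE : forall h h', edge_of h = edge_of h' <-> (h' = h \/ h' = glue h);
  edge_of_surj : forall e : E, exists h, edge_of h = e;
  vert_ofE : forall h h', vert_of h = vert_of h' <->
                          fconnect (fun x => snext (glue x)) h h';
  vert_of_surj : forall v : V, exists h, vert_of h = v;
  surf_connected : forall h h',
     connect (fun x y => (y == glue x) || (y == snext x)) h h';
  faces_nonempty : (0 < #|F|)%N
}.

Section Weighted.
Variables (R : rcfType) (V E F : finType) (T : triangulation V E F).

Definition Lf (I : E -> R) (r : V -> R) (h : side F) : R :=
  let ri := r (vert_of T h) in
  let rj := r (vert_of T (snext h)) in
  Num.sqrt (ri ^+ 2 + rj ^+ 2 + 2 * I (edge_of T h) * ri * rj).

Definition face_triangle_ineq (l : side F -> R) (f : F) : Prop :=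
  let l0 := l (f, 0%R) in
  let l1 := l (f, 1%R) in
  let l2 := l (f, 2%R) in
  [/\ l0 < l1 + l2, l1 < l0 + l2 & l2 < l0 + l1].

Definition admissible (I : E -> R) (r : V -> R) : Prop :=
  (forall e, 1 < I e) /\ (forall v, 0 < r v).

Definition Qf (I : E -> R) (r : V -> R) : Prop :=
  admissible I r /\ forall f : F, face_triangle_ineq (Lf I r) f.

Definition Delta3 (x y z : R) : R := x ^+ 2 + y ^+ 2 + z ^+ 2 + 2 * x * y * z - 1.

(* With h = (f, m) going from vertex i to vertex j, k the third vertex of f,
   and glue h going from j to i in the other face with third vertex l. *)
Definition local_delaunay (I : E -> R) (r : V -> R) (h : side F) : Prop :=
  let h1 := snext h in let h2 := snext h1 in
  let g := glue T h in let g1 := snext g in let g2 := snext g1 in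
  let p := r (vert_of T h2) in   (* r_k *)
  let q := r (vert_of T h) in    (* r_i *)
  let rr := r (vert_of T g2) in  (* r_l *)
  let s := r (vert_of T h1) in   (* r_j *)
  let a := I (edge_of T h2) in   (* I_ki *)
  let b := I (edge_of T g1) in   (* I_il *)
  let c := I (edge_of T g2) in   (* I_lj *)
  let d := I (edge_of T h1) in   (* I_jk *)
  let e := I (edge_of T h) in    (* I_ij *)
  let fv := (a * b + c * d + a * c * e + b * d * e
             + Num.sqrt (Delta3 a d e) * Num.sqrt (Delta3 b c e)) / (e ^+ 2 - 1) in
  Num.sqrt (Delta3 b c e) / p + Num.sqrt (Delta3 a d e) / rr
  <= Num.sqrt (Delta3 c d fv) / q + Num.sqrt (Delta3 a b fv) / s.

Definition delaunay_at_edge (I : E -> R) (r : V -> R) (e : E) : Prop :=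
  forall h, edge_of T h = e -> local_delaunay I r h.

Definition Df (I : E -> R) (r : V -> R) : Prop :=
  admissible I r /\ forall e : E, delaunay_at_edge I r e.

End Weighted.

From mathcomp Require Import all_boot all_order all_algebra.
From mathcomp Require Import ring lra.
Set Implicit Arguments. Unset Strict Implicit. Unset Printing Implicit Defensive.
Import Order.TTheory GRing.Theory Num.Theory.
Local Open Scope ring_scope.

(* Call a side degenerate when its length is at least the sum of the two other
   sides of its face.  For a face with radii p (opposite vertex), q, s and
   inversive distances a, d, e (e on the side C joining q and s), Heron's formula
   reads  (e^2 - 1) (A+B+C)(A+B-C)(C-A+B)(C+A-B) = 4 (Delta(a,d,e) p^2 C^2 - T^2),
   where T = faceT p q s a d e, and T > 0 when C is the degenerate side.  Once
   its square roots are simplified, the weighted Delaunay inequality at C reads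
   sqrt(Delta(b,c,e)) T1 r_l + sqrt(Delta(a,d,e)) T2 r_k <= 0.  Hence if C is
   degenerate in one face, then T2 < 0 and T2^2 >= Delta(b,c,e) r_l^2 C^2: the
   adjacent face is degenerate along one of its two other sides, which is longer
   than C.  So no degenerate side can have maximal length, i.e. there is none. *)

Section HingeAlgebra.
Variable R : rcfType.
Implicit Types p q s rr a b c d e x y z I : R.

Definition len x y I := Num.sqrt (x ^+ 2 + y ^+ 2 + 2 * I * x * y).

Lemma lenC x y I : len x y I = len y x I.
Proof. by rewrite /len; congr Num.sqrt; ring. Qed.

Lemma sqr_len x y I : 0 <= x -> 0 <= y -> 0 <= I ->
  len x y I ^+ 2 = x ^+ 2 + y ^+ 2 + 2 * I * x * y.
Proof.
move=> hx hy hI; rewrite sqr_sqrtr //.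
have : 0 <= I * (x * y) by rewrite !mulr_ge0.
nra.
Qed.

Lemma len_gt_add x y I : 0 < x -> 0 < y -> 1 < I -> x + y < len x y I.
Proof.
move=> hx hy hI.
have hxy : 0 < (I - 1) * (x * y) by rewrite !mulr_gt0 ?subr_gt0.
rewrite -(@ltr_pXn2r _ 2) ?nnegrE ?sqrtr_ge0 ?sqr_len //; lra.
Qed.

Lemma len_gt0 x y I : 0 < x -> 0 < y -> 1 < I -> 0 < len x y I.
Proof. by move=> hx hy hI; apply: lt_trans (len_gt_add hx hy hI); rewrite addr_gt0. Qed.

Lemma Delta3C x y z : Delta3 x y z = Delta3 y x z.
Proof. by rewrite /Delta3; ring. Qed.

Lemma Delta3_gt0 x y z : 0 <= x -> 0 <= y -> 1 < z -> 0 < Delta3 x y z.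
Proof.
move=> hx hy hz; rewrite /Delta3.
have : 0 <= x * y * z by rewrite !mulr_ge0 //; lra.
nra.
Qed.

Definition delaunay_f a b c d e :=
  (a * b + c * d + a * c * e + b * d * e
   + Num.sqrt (Delta3 a d e) * Num.sqrt (Delta3 b c e)) / (e ^+ 2 - 1).

Lemma delaunay_fC a b c d e : delaunay_f d c b a e = delaunay_f a b c d e.
Proof. by rewrite /delaunay_f (Delta3C d) (Delta3C c); congr (_ * _); ring. Qed.

Lemma Delta3_f_sqr a b c d e X Y :
  X ^+ 2 = Delta3 a d e -> Y ^+ 2 = Delta3 b c e -> e ^+ 2 - 1 != 0 ->
  Delta3 c d ((a * b + c * d + a * c * e + b * d * e + X * Y) / (e ^+ 2 - 1))
  = (((a + d * e) * Y + (b + c * e) * X) / (e ^+ 2 - 1)) ^+ 2.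
Proof.
move=> hX hY hE; apply/eqP; rewrite -subr_eq0; apply/eqP.
transitivity (((X ^+ 2 - Delta3 a d e) * (Y ^+ 2 - 2 * b * c * e - b ^+ 2 - c ^+ 2 * e ^+ 2)
  + (Y ^+ 2 - Delta3 b c e) * (d ^+ 2 - 1 - d ^+ 2 * e ^+ 2 + e ^+ 2)) / (e ^+ 2 - 1) ^+ 2).
  by rewrite /Delta3; field.
by rewrite hX hY !subrr !mul0r add0r mul0r.
Qed.

Lemma sqrt_Delta3_delaunay_f a b c d e :
  0 <= a -> 0 <= b -> 0 <= c -> 0 <= d -> 1 < e ->
  Num.sqrt (Delta3 c d (delaunay_f a b c d e))
  = ((a + d * e) * Num.sqrt (Delta3 b c e) + (b + c * e) * Num.sqrt (Delta3 a d e))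
    / (e ^+ 2 - 1).
Proof.
move=> ha hb hc hd he.
have hE : 0 < e ^+ 2 - 1 by nra.
rewrite /delaunay_f Delta3_f_sqr ?sqr_sqrtr ?gt_eqF ?ltW ?Delta3_gt0 //.
rewrite sqrtr_sqr ger0_norm // divr_ge0 ?(ltW hE) // addr_ge0 // mulr_ge0 ?sqrtr_ge0 //.
all: by rewrite addr_ge0 // mulr_ge0 //; lra.
Qed.

Lemma heron_le0P x y z : 0 < x -> 0 < y -> 0 < z ->
  (x + y + z) * (x + y - z) * (z - x + y) * (z + x - y) <= 0
  <-> [\/ x + y <= z, z + y <= x | z + x <= y].
Proof.
move=> hx hy hz; split.
  case: (lerP (x + y - z) 0) => h1; first by constructor 1; lra.
  case: (lerP (z - x + y) 0) => h2; first by constructor 2; lra.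
  case: (lerP (z + x - y) 0) => h3; first by constructor 3; lra.
  by rewrite leNgt !mulr_gt0 //; lra.
have hxyz : 0 < x + y + z by lra.
case=> h; [ rewrite (_ : _ * _ = (x + y - z) * ((x + y + z) * (z - x + y) * (z + x - y)))
          | rewrite (_ : _ * _ = (z - x + y) * ((x + y + z) * (x + y - z) * (z + x - y)))
          | rewrite (_ : _ * _ = (z + x - y) * ((x + y + z) * (x + y - z) * (z - x + y))) ];
  rewrite ?mulr_le0_ge0 ?mulr_ge0 //; try ring; lra.
Qed.

Definition faceT p q s a d e :=
  (e ^+ 2 - 1) * q * s - (a + d * e) * p * s - (d + a * e) * p * q.

Section Face.
Variables p q s a d e : R.
Local Notation A := (len s p d).
Local Notation B := (len p q a).
Local Notation C := (len q s e).

Lemma heron_faceT : 0 <= p -> 0 <= q -> 0 <= s -> 0 <= a -> 0 <= d -> 0 <= e ->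
  (e ^+ 2 - 1) * ((A + B + C) * (A + B - C) * (C - A + B) * (C + A - B))
  = 4 * (Delta3 a d e * p ^+ 2 * C ^+ 2 - faceT p q s a d e ^+ 2).
Proof.
move=> hp hq hs ha hd he.
transitivity ((e ^+ 2 - 1) * (2 * (A ^+ 2 * B ^+ 2 + B ^+ 2 * C ^+ 2 + C ^+ 2 * A ^+ 2)
                             - (A ^+ 2 ^+ 2 + B ^+ 2 ^+ 2 + C ^+ 2 ^+ 2))); first by ring.
by rewrite !sqr_len // /Delta3 /faceT; ring.
Qed.

Lemma face_degenerateP :
  0 < p -> 0 < q -> 0 < s -> 1 < a -> 1 < d -> 1 < e ->
  [\/ A + B <= C, C + B <= A | C + A <= B]
  <-> Delta3 a d e * p ^+ 2 * C ^+ 2 <= faceT p q s a d e ^+ 2.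
Proof.
move=> hp hq hs ha hd he.
have hE : 0 < e ^+ 2 - 1 by nra.
rewrite -heron_le0P ?len_gt0 // -(pmulr_rle0 _ hE) heron_faceT ?pmulr_rle0 ?subr_le0 //; lra.
Qed.

Lemma faceT_gt0 : 0 < p -> 0 < q -> 0 < s -> 1 < a -> 1 < d -> 1 < e ->
  A + B <= C -> 0 < faceT p q s a d e.
Proof.
move=> hp hq hs ha hd he hABC.
have hA := sqr_len (ltW hs) (ltW hp) (ltW (lt_trans ltr01 hd)).
have hB := sqr_len (ltW hp) (ltW hq) (ltW (lt_trans ltr01 ha)).
have hC := sqr_len (ltW hq) (ltW hs) (ltW (lt_trans ltr01 he)).
set u := 2 * a * p * q in hB; set v := 2 * d * s * p in hA; set w := 2 * e * q * s in hC.
have hu : 0 < u by rewrite /u !mulr_gt0 //; lra.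
have hv : 0 < v by rewrite /v !mulr_gt0 //; lra.
have hABpos : 0 < A * B by rewrite mulr_gt0 ?len_gt0.
have hAB2 : (A * B) ^+ 2 = (s ^+ 2 + p ^+ 2 + v) * (p ^+ 2 + q ^+ 2 + u).
  by rewrite exprMn hA hB.
have hw : 2 * (A * B) + 2 * p ^+ 2 + u + v <= w.
  have hAplusB : 0 < A + B by rewrite addr_gt0 ?len_gt0.
  have : (A + B) ^+ 2 <= C ^+ 2 by nra.
  rewrite sqrrD hA hB hC; lra.
have hT : 4 * q * s * faceT p q s a d e
          = w * (w - u - v) - 4 * q ^+ 2 * s ^+ 2 - 2 * u * s ^+ 2 - 2 * v * q ^+ 2.
  by rewrite /faceT /u /v /w; ring.
have : 0 < 4 * q * s * faceT p q s a d e by rewrite hT; nra.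
by rewrite pmulr_rgt0 // !mulr_gt0.
Qed.

End Face.

Lemma delaunay_faceTE p q rr s a b c d e :
  0 < p -> 0 < q -> 0 < rr -> 0 < s ->
  0 <= a -> 0 <= b -> 0 <= c -> 0 <= d -> 1 < e ->
  let X := Num.sqrt (Delta3 a d e) in let Y := Num.sqrt (Delta3 b c e) in
  let f := delaunay_f a b c d e in
  (e ^+ 2 - 1) * p * q * rr * s
  * (Y / p + X / rr - (Num.sqrt (Delta3 c d f) / q + Num.sqrt (Delta3 a b f) / s))
  = Y * faceT p q s a d e * rr + X * faceT rr q s b c e * p.
Proof.
move=> hp hq hrr hs ha hb hc hd he X Y f.
have hE : 0 < e ^+ 2 - 1 by nra.
have sqrt_abf : Num.sqrt (Delta3 a b f)
                = ((d + a * e) * Y + (c + b * e) * X) / (e ^+ 2 - 1).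
  by rewrite /f -delaunay_fC Delta3C sqrt_Delta3_delaunay_f // /X /Y (Delta3C c) (Delta3C d).
rewrite sqrt_abf sqrt_Delta3_delaunay_f // -/X -/Y /faceT.
by field; rewrite !gt_eqF.
Qed.

Lemma hinge_degenerate p q rr s a b c d e :
  0 < p -> 0 < q -> 0 < rr -> 0 < s -> 1 < a -> 1 < b -> 1 < c -> 1 < d -> 1 < e ->
  let X := Num.sqrt (Delta3 a d e) in let Y := Num.sqrt (Delta3 b c e) in
  let f := delaunay_f a b c d e in
  Y / p + X / rr <= Num.sqrt (Delta3 c d f) / q + Num.sqrt (Delta3 a b f) / s ->
  len s p d + len p q a <= len q s e ->
  len q s e + len rr q b <= len s rr c \/ len q s e + len s rr c <= len rr q b.
Proof.
move=> hp hq hrr hs ha hb hc hd he X Y f hD hdeg.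
have hE : 0 < e ^+ 2 - 1 by nra.
have hX2 : X ^+ 2 = Delta3 a d e by rewrite sqr_sqrtr // ltW // Delta3_gt0 //; lra.
have hY2 : Y ^+ 2 = Delta3 b c e by rewrite sqr_sqrtr // ltW // Delta3_gt0 //; lra.
have hX : 0 < X by rewrite sqrtr_gt0 Delta3_gt0 //; lra.
have hY : 0 < Y by rewrite sqrtr_gt0 Delta3_gt0 //; lra.
set C := len q s e in hdeg *.
set T1 := faceT p q s a d e; set T2 := faceT rr q s b c e.
have hT1 : 0 < T1 := faceT_gt0 hp hq hs ha hd he hdeg.
have hT1sq : Delta3 a d e * p ^+ 2 * C ^+ 2 <= T1 ^+ 2.
  by apply/(face_degenerateP hp hq hs ha hd he); constructor 1.
have hsum : Y * T1 * rr + X * T2 * p <= 0.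
  rewrite -delaunay_faceTE -/X -/Y -/f; try lra.
  by rewrite pmulr_rle0 ?subr_le0 // !mulr_gt0 //; nra.
have hYT1 : 0 < Y * T1 * rr by rewrite !mulr_gt0.
have hT2 : T2 < 0 by rewrite -(pmulr_rlt0 _ (mulr_gt0 hX hp)); lra.
have hT2sq : Delta3 b c e * rr ^+ 2 * C ^+ 2 <= T2 ^+ 2.
  have hXp : 0 < (X * p) ^+ 2 by rewrite exprn_gt0 // mulr_gt0.
  rewrite -(ler_pM2l hXp).
  have -> : (X * p) ^+ 2 * (Delta3 b c e * rr ^+ 2 * C ^+ 2)
            = (Y * rr) ^+ 2 * (Delta3 a d e * p ^+ 2 * C ^+ 2) by rewrite -hX2 -hY2; ring.
  apply: le_trans (ler_wpM2l (sqr_ge0 (Y * rr)) hT1sq) _.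
  have -> : (Y * rr) ^+ 2 * T1 ^+ 2 = (Y * T1 * rr) ^+ 2 by ring.
  have -> : (X * p) ^+ 2 * T2 ^+ 2 = (X * T2 * p) ^+ 2 by ring.
  nra.
case/(face_degenerateP hrr hq hs hb hc he): hT2sq => h; [exfalso | by left | by right].
by have := faceT_gt0 hrr hq hs hb hc he h; rewrite -/T2; lra.
Qed.

End HingeAlgebra.

Lemma snext3 (F : finType) (h : side F) : snext (snext (snext h)) = h.
Proof. by case: h => f [[|[|[|i]]] hi] //; congr pair; apply: val_inj. Qed.

Definition degenerate_side (R : numDomainType) (F : finType) (l : side F -> R) h :=
  l (snext h) + l (snext (snext h)) <= l h.

Lemma nondegenerate_face_triangle_ineq (R : rcfType) (F : finType)
    (l : side F -> R) (f : F) :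
  (forall i, ~~ degenerate_side l (f, i)) -> face_triangle_ineq l f.
Proof.
move=> nd; have := nd 0; have := nd 1; have := nd 2.
have ordS0 : ordS 0 = 1 :> 'I_3 by apply: val_inj.
have ordS1 : ordS 1 = 2 :> 'I_3 by apply: val_inj.
have ordS2 : ordS 2 = 0 :> 'I_3 by apply: val_inj.
rewrite /degenerate_side /face_triangle_ineq -!ltNge /snext /= ordS0 ordS1 ordS2 ordS0.
by move=> *; split; lra.
Qed.

Section Triangulation.
Variables (V E F : finType) (T : triangulation V E F).

Lemma vert_of_snext_glue h : vert_of T (snext (glue T h)) = vert_of T h.
Proof. by symmetry; apply/(vert_ofE T); apply: fconnect1. Qed.

Lemma vert_of_glue h : vert_of T (glue T h) = vert_of T (snext h).
Proof. by rewrite -{2}(glue_invol T h) vert_of_snext_glue. Qed.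

Lemma edge_of_glue h : edge_of T (glue T h) = edge_of T h.
Proof. by symmetry; apply/(edge_ofE T); right. Qed.

Variables (R : rcfType) (I : E -> R) (r : V -> R).
Local Notation L := (Lf T I r).

Lemma Lf_glue h : L (glue T h) = L h.
Proof. by rewrite /Lf vert_of_glue vert_of_snext_glue edge_of_glue -/(len _ _ _) lenC. Qed.

Lemma Lf_gt0 h : admissible I r -> 0 < L h.
Proof. by case=> hI hr; apply: len_gt0. Qed.

Lemma longer_degenerate_side h : admissible I r ->
  local_delaunay T I r h -> degenerate_side L h ->
  exists2 h', degenerate_side L h' & L h < L h'.
Proof.
move=> adm hD hdeg; have [hI hr] := adm; set g := glue T h.
have eb : L (snext g) = len (r (vert_of T (snext (snext g)))) (r (vert_of T h))
                            (I (edge_of T (snext g))).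
  by rewrite /Lf vert_of_snext_glue -/(len _ _ _) lenC.
have ec : L (snext (snext g)) = len (r (vert_of T (snext h))) (r (vert_of T (snext (snext g))))
                                    (I (edge_of T (snext (snext g)))).
  by rewrite /Lf snext3 vert_of_glue -/(len _ _ _) lenC.
have deg := hdeg; rewrite /degenerate_side /Lf snext3 in deg.
have [h1|h2] : L h + L (snext g) <= L (snext (snext g))
               \/ L h + L (snext (snext g)) <= L (snext g).
  by rewrite eb ec; exact: hinge_degenerate (hr _) (hr _) (hr _) (hr _)
                             (hI _) (hI _) (hI _) (hI _) (hI _) hD deg.
- exists (snext (snext g)); last by have := Lf_gt0 (snext g) adm; lra.
  by rewrite /degenerate_side !snext3 Lf_glue; lra.
- exists (snext g); last by have := Lf_gt0 (snext (snext g)) adm; lra.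
  by rewrite /degenerate_side snext3 Lf_glue; lra.
Qed.

Lemma Df_nondegenerate h : Df T I r -> ~~ degenerate_side L h.
Proof.
case=> adm hD; apply/negP => deg0.
have [hm deg_m max_m] := arg_maxP L deg0.
have [h' deg' lt_h'] := longer_degenerate_side adm (hD _ hm erefl) deg_m.
by have := max_m h' deg'; rewrite /= leNgt lt_h'.
Qed.

End Triangulation.

Theorem theorem4p4 (R : rcfType) (V E F : finType) (T : triangulation V E F)
  (I : E -> R) (r : V -> R) :
  Df T I r -> Qf T I r.
Proof.
move=> hDf; split=> [|f]; first by case: hDf.
by apply: nondegenerate_face_triangle_ineq => i; apply: Df_nondegenerate.
Qed.
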